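(* Let $u\in\mathbb{R}^3$ with $\kappa(u)>2$. Then there exists $\gamma\in\Gamma$ such that $\tilde u=\gamma u=(\tilde x,\tilde y,\tilde z)$ satisfies either $\tilde u\in(-\infty,-2]^3$, or $\tilde x\in[-2,2]$. (In the first case $\tilde u$ is the character of a Fuchsian representation whose quotient is a hyperbolic three-holed sphere, with boundary corresponding to cusps or closed geodesics; in the second, $\tilde u$ is the character of a representation mapping $X$ to a non-hyperbolic element.)
   Context: $\kappa(x,y,z)=x^2+y^2+z^2-xyz-2$. $\Gamma$ denotes the group of polynomial automorphisms of $\mathbb{C}^3$ generated by: all permutations of the coordinates $x,y,z$; the three sign changes $(x,y,z)\mapsto(x,-y,-z)$, $(x,y,z)\mapsto(-x,y,-z)$, $(x,y,z)\mapsto(-x,-y,z)$; and the quadratic reflection $(x,y,z)\mapsto(yz-x,y,z)$. Every element of $\Gamma$ preserves $\kappa$ and maps $\mathbb{R}^3$ to itself. A point $(x,y,z)$ is viewed as the character $(\mathrm{tr}\rho(X),\mathrm{tr}\rho(Y),\mathrm{tr}\rho(XY))$ of a representation $\rho$ of the free group $\langle X,Y\rangle$ into $\mathrm{SL}(2,\mathbb{C})$. *)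

From Stdlib Require Import Reals.
Open Scope R_scope.

Definition pt : Type := (R * R * R)%type.

Definition kappa (u : pt) : R :=
  let '(x, y, z) := u in x^2 + y^2 + z^2 - x*y*z - 2.

(* Generators of Gamma, as maps of R^3 (they are polynomial automorphisms of
   C^3 with real coefficients; we record their action on R^3). *)
Definition swap_xy (u : pt) : pt := let '(x, y, z) := u in (y, x, z).
Definition swap_yz (u : pt) : pt := let '(x, y, z) := u in (x, z, y).
Definition swap_xz (u : pt) : pt := let '(x, y, z) := u in (z, y, x).
Definition cyc1 (u : pt) : pt := let '(x, y, z) := u in (y, z, x).
Definition cyc2 (u : pt) : pt := let '(x, y, z) := u in (z, x, y).
Definition sign_x (u : pt) : pt := let '(x, y, z) := u in (x, -y, -z).
Definition sign_y (u : pt) : pt := let '(x, y, z) := u in (-x, y, -z).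
Definition sign_z (u : pt) : pt := let '(x, y, z) := u in (-x, -y, z).
Definition refl_x (u : pt) : pt := let '(x, y, z) := u in (y*z - x, y, z).

Inductive generator : (pt -> pt) -> Prop :=
  | gen_swap_xy : generator swap_xy
  | gen_swap_yz : generator swap_yz
  | gen_swap_xz : generator swap_xz
  | gen_cyc1 : generator cyc1
  | gen_cyc2 : generator cyc2
  | gen_sign_x : generator sign_x
  | gen_sign_y : generator sign_y
  | gen_sign_z : generator sign_z
  | gen_refl_x : generator refl_x.

(* Every generator's inverse is
   again a generator (involutions; cyc1 and cyc2 are mutually inverse), so the
   generated group is the monoid of finite compositions of generators. *)
Inductive Gamma : (pt -> pt) -> Prop :=
  | Gamma_id : Gamma (fun u => u)
  | Gamma_gen (g : pt -> pt) (f : pt -> pt) :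
      generator g -> Gamma f -> Gamma (fun u => g (f u)).

(** Sort a point with all coordinates greater than 2 decreasingly and apply
    the reflection in the largest coordinate [x]: [x] and [x' = yz - x] are
    the two roots of [t^2 - yz t + y^2 + z^2 - 2 - kappa], and
    [(x - x')^2 = (y^2 - 4)(z^2 - 4) + 4 (kappa - 2) >= 4 (kappa - 2)], so
    the coordinate sum drops by at least [2 sqrt (kappa - 2)].  After finitely
    many steps the new coordinate [x'] leaves [(2, +oo)]; if it falls below
    [-2], flipping the signs of [y] and [z] lands in [(-oo, -2)^3].  Points with a coordinate in
    [[-2, 2]] are finished by a permutation, and the remaining sign patterns
    are brought to [(2, +oo)^3] or [(-oo, -2)^3] by sign changes. *)

From Stdlib Require Import Reals Lra Psatz.
Open Scope R_scope.

Lemma Gamma_comp (g f : pt -> pt) : Gamma g -> Gamma f -> Gamma (fun u => g (f u)).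
Proof.
  intros Hg Hf; induction Hg as [| g0 f0 Hgen _ IH].
  - exact Hf.
  - exact (Gamma_gen g0 (fun u => f0 (f u)) Hgen IH).
Qed.

Lemma Gamma_generator (g : pt -> pt) : generator g -> Gamma g.
Proof. intros Hg; exact (Gamma_gen g (fun u => u) Hg Gamma_id). Qed.

Lemma kappa_generator (g : pt -> pt) (u : pt) : generator g -> kappa (g u) = kappa u.
Proof. intros Hg; destruct u as [[x y] z]; destruct Hg; simpl; ring. Qed.

Definition reduced (u : pt) : Prop :=
  let '(x, y, z) := u in (x <= -2 /\ y <= -2 /\ z <= -2) \/ -2 <= x <= 2.

Definition reducible (u : pt) : Prop :=
  exists gamma : pt -> pt, Gamma gamma /\ reduced (gamma u).

Lemma reducible_reduced (u : pt) : reduced u -> reducible u.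
Proof. intros Hu; exists (fun v => v); split; [constructor | exact Hu]. Qed.

Lemma reducible_generator (g : pt -> pt) (u : pt) :
  generator g -> reducible (g u) -> reducible u.
Proof.
  intros Hg [gamma [Hgamma Hred]].
  exists (fun v => gamma (g v)); split; [|exact Hred].
  exact (Gamma_comp gamma g Hgamma (Gamma_generator g Hg)).
Qed.

Lemma reducible_of_sorted (P : R -> R -> R -> Prop) :
  (forall a b e, P a b e -> P b a e) ->
  (forall a b e, P a b e -> P a e b) ->
  (forall a b e, P a b e -> a >= b -> b >= e -> reducible (a, b, e)) ->
  forall x y z, P x y z -> reducible (x, y, z).
Proof.
  intros Pab Pbe Hsorted x y z Hxyz.
  destruct (Rle_dec y x), (Rle_dec z y), (Rle_dec z x).
  - apply Hsorted; auto; lra.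
  - lra.
  - apply (reducible_generator swap_yz); [constructor|].
    apply Hsorted; auto; lra.
  - apply (reducible_generator cyc2); [constructor|].
    apply Hsorted; [apply Pab, Pbe, Hxyz | lra | lra].
  - apply (reducible_generator swap_xy); [constructor|].
    apply Hsorted; auto; lra.
  - apply (reducible_generator cyc1); [constructor|].
    apply Hsorted; [apply Pbe, Pab, Hxyz | lra | lra].
  - lra.
  - apply (reducible_generator swap_xz); [constructor|].
    apply Hsorted; [apply Pab, Pbe, Pab, Hxyz | lra | lra].
Qed.

Lemma refl_x_discriminant (x y z : R) :
  (2 * x - y * z) ^ 2 = (y ^ 2 - 4) * (z ^ 2 - 4) + 4 * (kappa (x, y, z) - 2).
Proof. unfold kappa; ring. Qed.

Lemma refl_x_lt (x y z : R) :
  kappa (x, y, z) > 2 -> x >= y -> y >= z -> z > 2 -> y * z - x < y.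
Proof.
  intros K Hxy Hyz Hz.
  (* the quadratic in [t] with roots [x] and [y z - x], evaluated at [t = y] *)
  assert (Hroots : (y - x) * (y - (y * z - x))
                   = 2 * y ^ 2 - y ^ 2 * z + z ^ 2 - 2 - kappa (x, y, z))
    by (unfold kappa; ring).
  assert (Hy : 2 * y ^ 2 - y ^ 2 * z + z ^ 2 - 4 <= 0).
  { assert (0 <= (y - z) * (y + z) * (z - 2)) by (repeat apply Rmult_le_pos; lra).
    assert (0 <= (z - 2) ^ 2 * (z + 1)) by (apply Rmult_le_pos; [apply pow2_ge_0 | lra]).
    nra. }
  destruct (Req_dec x y) as [<- | Hne]; nra.
Qed.

Lemma refl_x_gap (x y z : R) :
  kappa (x, y, z) > 2 -> x >= y -> y >= z -> z > 2 ->
  2 * sqrt (kappa (x, y, z) - 2) <= x - (y * z - x).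
Proof.
  intros K Hxy Hyz Hz.
  pose proof (refl_x_lt x y z K Hxy Hyz Hz) as Hlt.
  pose proof (refl_x_discriminant x y z) as Hdisc.
  pose proof (sqrt_sqrt (kappa (x, y, z) - 2) ltac:(lra)) as Hsq.
  pose proof (sqrt_pos (kappa (x, y, z) - 2)).
  assert (0 <= (y ^ 2 - 4) * (z ^ 2 - 4)) by (apply Rmult_le_pos; nra).
  nra.
Qed.

Lemma reducible_descent (c : R) : 0 < c ->
  forall (n : nat) (x y z : R), kappa (x, y, z) = 2 + c ->
  x > 2 -> y > 2 -> z > 2 -> x + y + z <= INR n * (2 * sqrt c) ->
  reducible (x, y, z).
Proof.
  intros Hc n; induction n as [|n IH]; intros x y z.
  - simpl; lra.
  - intros Kxyz Hx Hy Hz Hxyz.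
    apply (reducible_of_sorted (fun a b e => kappa (a, b, e) = 2 + c /\
      a > 2 /\ b > 2 /\ e > 2 /\ a + b + e <= INR (S n) * (2 * sqrt c)));
      [| | | repeat split; assumption].
    + intros a b e (K & ?); rewrite <- (kappa_generator swap_xy) in K by constructor.
      simpl in K; repeat split; auto; lra.
    + intros a b e (K & ?); rewrite <- (kappa_generator swap_yz) in K by constructor.
      simpl in K; repeat split; auto; lra.
    + intros a b e (K & Ha & Hb & He & Hsum) Hab Hbe.
      pose proof (refl_x_gap a b e ltac:(lra) Hab Hbe He) as Hgap.
      rewrite K in Hgap; replace (2 + c - 2) with c in Hgap by ring.
      rewrite S_INR in Hsum.
      apply (reducible_generator refl_x); [constructor|]; simpl.
      destruct (Rle_dec (b * e - a) 2).
      * destruct (Rle_dec (-2) (b * e - a)).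
        -- apply reducible_reduced; simpl; lra.
        -- apply (reducible_generator sign_x); [constructor|].
           apply reducible_reduced; simpl; lra.
      * apply IH; try lra.
        rewrite <- K; exact (kappa_generator refl_x (a, b, e) ltac:(constructor)).
Qed.

Lemma reducible_gt2 (x y z : R) :
  kappa (x, y, z) > 2 -> x > 2 -> y > 2 -> z > 2 -> reducible (x, y, z).
Proof.
  intros K Hx Hy Hz.
  set (c := kappa (x, y, z) - 2).
  assert (Hc : 0 < c) by (unfold c; lra).
  assert (Hstep : 0 < 2 * sqrt c) by (pose proof (sqrt_lt_R0 c Hc); lra).
  destruct (INR_archimed (2 * sqrt c) (x + y + z) Hstep) as [n Hn].
  apply (reducible_descent c Hc n); [unfold c; ring | lra..].
Qed.

Lemma Rabs_gt2_cases (t : R) : 2 < Rabs t -> t < -2 \/ 2 < t.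
Proof. unfold Rabs; destruct (Rcase_abs t); lra. Qed.

Lemma Rabs_le2_or_gt2 (t : R) : -2 <= t <= 2 \/ 2 < Rabs t.
Proof. unfold Rabs; destruct (Rcase_abs t); lra. Qed.

Lemma reducible_gt2_gt2_abs (x y z : R) : kappa (x, y, z) > 2 ->
  x > 2 -> y > 2 -> 2 < Rabs z -> reducible (x, y, z).
Proof.
  intros K Hx Hy [Hz|Hz]%Rabs_gt2_cases.
  - apply (reducible_generator sign_z); [constructor|].
    apply reducible_reduced; simpl; lra.
  - exact (reducible_gt2 x y z K Hx Hy Hz).
Qed.

Lemma reducible_gt2_abs_abs (x y z : R) : kappa (x, y, z) > 2 ->
  x > 2 -> 2 < Rabs y -> 2 < Rabs z -> reducible (x, y, z).
Proof.
  intros K Hx [Hy|Hy]%Rabs_gt2_cases Hz.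
  - apply (reducible_generator sign_x); [constructor|].
    rewrite <- (kappa_generator sign_x) in K by constructor.
    apply reducible_gt2_gt2_abs; simpl; [exact K | exact Hx | lra | now rewrite Rabs_Ropp].
  - exact (reducible_gt2_gt2_abs x y z K Hx Hy Hz).
Qed.

Lemma reducible_abs_gt2 (x y z : R) : kappa (x, y, z) > 2 ->
  2 < Rabs x -> 2 < Rabs y -> 2 < Rabs z -> reducible (x, y, z).
Proof.
  intros K [Hx|Hx]%Rabs_gt2_cases Hy Hz.
  - apply (reducible_generator sign_y); [constructor|].
    rewrite <- (kappa_generator sign_y) in K by constructor.
    apply reducible_gt2_abs_abs; simpl; [exact K | lra | exact Hy | now rewrite Rabs_Ropp].
  - exact (reducible_gt2_abs_abs x y z K Hx Hy Hz).
Qed.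

Lemma reducible_of_kappa_gt2 (x y z : R) : kappa (x, y, z) > 2 -> reducible (x, y, z).
Proof.
  intros K.
  destruct (Rabs_le2_or_gt2 x) as [Hx|Hx].
  { apply reducible_reduced; simpl; right; exact Hx. }
  destruct (Rabs_le2_or_gt2 y) as [Hy|Hy].
  { apply (reducible_generator swap_xy); [constructor|].
    apply reducible_reduced; simpl; right; exact Hy. }
  destruct (Rabs_le2_or_gt2 z) as [Hz|Hz].
  { apply (reducible_generator swap_xz); [constructor|].
    apply reducible_reduced; simpl; right; exact Hz. }
  exact (reducible_abs_gt2 x y z K Hx Hy Hz).
Qed.

Theorem mainTheorem10 (x y z : R) :
  kappa (x, y, z) > 2 ->
  exists gamma : pt -> pt, Gamma gamma /\
    exists xt yt zt : R, gamma (x, y, z) = (xt, yt, zt) /\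
      ((xt <= -2 /\ yt <= -2 /\ zt <= -2) \/ (-2 <= xt <= 2)).
Proof.
  intros K.
  destruct (reducible_of_kappa_gt2 x y z K) as [gamma [Hgamma Hred]].
  exists gamma; split; [exact Hgamma|].
  destruct (gamma (x, y, z)) as [[xt yt] zt].
  exists xt, yt, zt; split; [reflexivity | exact Hred].
Qed.
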